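(* Let $M=(N,X,f,p)$ be a mechanism and $\hat M=(N,\hat X,\hat f,\hat p)$ a simplification of $M$ that satisfies outcome reducibility. Then $\hat M$ is total with respect to Nash equilibria: for every type profile $\theta$ and every Nash equilibrium $x$ of $M$ for $\theta$, there is a Nash equilibrium of $\hat M$ for $\theta$ yielding the same outcome and the same payments as $x$.
   Context: A mechanism $(N,X,f,p)$: agents $N=\{1,\dots,n\}$ with types $\theta_i\in\Theta_i$ and valuations $v_i:\Omega\times\Theta_i\to\mathbb{R}$ over outcomes $\Omega$; message sets $X=\prod_i X_i$, social choice function $f:X\to\Omega$, payment function $p:X\to\mathbb{R}^n$; utility $u_i(x,\theta_i)=v_i(f(x),\theta_i)-p_i(x)$. A simplification $(N,\hat X,\hat f,\hat p)$ of it has $\hat X=\prod_i\hat X_i$ with $\hat X_i\subseteq X_i$, $\hat f=f|_{\hat X}$, $\hat p=p|_{\hat X}$. For a fixed type profile $\theta$, a message profile $x$ is a Nash equilibrium if no agent $i$ has a message in its message set giving it strictly higher utility against $x_{-i}$. Outcome reducibility: there is a map $h:X\to\hat X$ such that (i) $f(x)=f(h(x))$ and $p(x)=p(h(x))$ for all $x\in X$; and (ii) for every type profile $\theta$, every $i\in N$, every $x\in X$ and every $\hat x'_i\in\hat X_i$ there exists $x'_i\in X_i$ with $u_i((x'_i,x_{-i}),\theta_i)\ge u_i((\hat x'_i,h_{-i}(x)),\theta_i)$, where $h_{-i}(x)$ denotes the components of $h(x)$ other than $i$'s. *)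

From Stdlib Require Import Reals.
From mathcomp Require Import all_boot.

(* Messages of all agents live in a common universe [Msg]; agent i's message
   set is the subset [X i : Msg -> Prop].  A message profile is [x : 'I_n -> Msg]. *)

Definition profile_in {n : nat} {Msg : Type} (X : 'I_n -> Msg -> Prop)
  (x : 'I_n -> Msg) : Prop := forall i, X i (x i).

Definition upd {n : nat} {Msg : Type} (x : 'I_n -> Msg) (i : 'I_n) (m : Msg)
  : 'I_n -> Msg := fun j => if j == i then m else x j.

Definition utility {n : nat} {Msg Omega : Type} {Theta : 'I_n -> Type}
  (v : forall i, Omega -> Theta i -> R) (f : ('I_n -> Msg) -> Omega)
  (p : ('I_n -> Msg) -> 'I_n -> R) (i : 'I_n) (x : 'I_n -> Msg) (t : Theta i) : R :=
  Rminus (v i (f x) t) (p x i).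

(* Nash equilibrium of the mechanism with message sets X (and f, p restricted
   to the X-profiles) for the type profile theta. *)
Definition NashEq {n : nat} {Msg Omega : Type} {Theta : 'I_n -> Type}
  (v : forall i, Omega -> Theta i -> R) (X : 'I_n -> Msg -> Prop)
  (f : ('I_n -> Msg) -> Omega) (p : ('I_n -> Msg) -> 'I_n -> R)
  (theta : forall i, Theta i) (x : 'I_n -> Msg) : Prop :=
  profile_in X x /\
  forall i m, X i m ->
    ~ Rgt (utility v f p i (upd x i m) (theta i)) (utility v f p i x (theta i)).

Definition outcome_reducible {n : nat} {Msg Omega : Type} {Theta : 'I_n -> Type}
  (v : forall i, Omega -> Theta i -> R) (X Xh : 'I_n -> Msg -> Prop)
  (f : ('I_n -> Msg) -> Omega) (p : ('I_n -> Msg) -> 'I_n -> R) : Prop :=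
  exists h : ('I_n -> Msg) -> ('I_n -> Msg),
    (forall x, profile_in X x -> profile_in Xh (h x)) /\
    (forall x, profile_in X x -> f x = f (h x) /\ forall j, p x j = p (h x) j) /\
    (forall (theta : forall i, Theta i) (i : 'I_n) (x : 'I_n -> Msg) (xh' : Msg),
        profile_in X x -> Xh i xh' ->
        exists x', X i x' /\
          Rge (utility v f p i (upd x i x') (theta i))
              (utility v f p i (upd (h x) i xh') (theta i))).

From Stdlib Require Import Reals Lra.
From mathcomp Require Import all_boot.

(* Reduction h preserves outcomes and payments, so x and h x give every agent
   the same utility; a profitable simplified deviation from h x would, by
   condition (ii), yield an at least as good deviation from x in the original
   mechanism, contradicting that x is an equilibrium. *)

Section OutcomeReducibility.

Variables (n : nat) (Msg Omega : Type) (Theta : 'I_n -> Type).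
Variables (v : forall i, Omega -> Theta i -> R) (f : ('I_n -> Msg) -> Omega).
Variable p : ('I_n -> Msg) -> 'I_n -> R.

Lemma utility_eq_of_outcome (x y : 'I_n -> Msg) (i : 'I_n) (t : Theta i) :
  f x = f y -> (forall j, p x j = p y j) ->
  utility v f p i x t = utility v f p i y t.
Proof. by move=> Ef Ep; rewrite /utility Ef Ep. Qed.

Variables X Xh : 'I_n -> Msg -> Prop.

Lemma NashEq_of_dominated_deviations (theta : forall i, Theta i)
    (x xh : 'I_n -> Msg) :
  profile_in Xh xh ->
  f x = f xh -> (forall j, p x j = p xh j) ->
  (forall i m, Xh i m -> exists2 x', X i x' &
     Rge (utility v f p i (upd x i x') (theta i))
         (utility v f p i (upd xh i m) (theta i))) ->
  NashEq v X f p theta x -> NashEq v Xh f p theta xh.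
Proof.
move=> Xh_xh Ef Ep dominated [_ x_Nash]; split=> // i m Xh_m Hgt.
have [x' X_x' Hge] := dominated i m Xh_m.
apply: (x_Nash i x' X_x').
have Eu : utility v f p i x (theta i) = utility v f p i xh (theta i)
  by exact: utility_eq_of_outcome.
rewrite /Rgt -Eu in Hgt *; lra.
Qed.

End OutcomeReducibility.

Theorem lemma1 (n : nat) (Msg Omega : Type) (Theta : 'I_n -> Type)
  (v : forall i, Omega -> Theta i -> R) (X Xh : 'I_n -> Msg -> Prop)
  (f : ('I_n -> Msg) -> Omega) (p : ('I_n -> Msg) -> 'I_n -> R) :
  (forall i m, Xh i m -> X i m) ->
  outcome_reducible v X Xh f p ->
  forall (theta : forall i, Theta i) (x : 'I_n -> Msg),
    NashEq v X f p theta x ->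
    exists xh, NashEq v Xh f p theta xh /\ f xh = f x /\ forall j, p xh j = p x j.
Proof.
(* Totality does not need [Xh i \subset X i]. *)
move=> _ [h [h_Xh [h_outcome h_dominate]]] theta x x_Nash.
have [X_x _] := x_Nash.
have [Ef Ep] := h_outcome x X_x.
exists (h x); split; last by split=> [|j]; rewrite ?Ef ?Ep.
apply: NashEq_of_dominated_deviations (h_Xh x X_x) Ef Ep _ x_Nash => i xh' Xh_xh'.
by have [x' [? ?]] := h_dominate theta i x xh' X_x Xh_xh'; exists x'.
Qed.
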